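(* Let $(G,* )$ be a metrizable topological group. The following are equivalent: (1) $G$ has the property ${\sf Smirnov}$-${\sf S}_c(\mathcal{O}_{\sf nbd},\mathcal{O})$; (2) $G$ has the finitary Haver property with respect to every left-invariant metric on $G$ compatible with the topology of $G$.
   Context: For a topological group $(G,* )$ with identity $e$ and a neighborhood $U$ of $e$, let $\mathcal{O}(U)=\{x*U: x\in G\}$ and $\mathcal{O}_{\sf nbd}=\{\mathcal{O}(U): U \text{ a neighborhood of } e\}$. $\mathcal{O}$ denotes the collection of all open covers of $G$. A family $\mathcal{B}$ refines $\mathcal{A}$ if every member of $\mathcal{B}$ is contained in some member of $\mathcal{A}$. ${\sf Smirnov}$-${\sf S}_c(\mathcal{A},\mathcal{B})$ is the statement: for each sequence $(A_n:n<\infty)$ of elements of $\mathcal{A}$ there exist a positive integer $k$ and a sequence $(B_n:n\le k)$ where each $B_n$ is a pairwise disjoint family of open sets refining $A_n$, such that $\bigcup_{n\le k}B_n\in\mathcal{B}$. A metrizable space $X$ is finitary Haver with respect to a metric $d$ if for each sequence $(\epsilon_n:n<\infty)$ of positive reals there exist a positive integer $k$ and a sequence $(\mathcal{V}_n:n\le k)$ where each $\mathcal{V}_n$ is a pairwise disjoint family of open sets each of $d$-diameter less than $\epsilon_n$, such that $\bigcup_{n\le k}\mathcal{V}_n$ covers $X$. A metric $d$ on $G$ is left-invariant if $d(g*x,g*y)=d(x,y)$ for all $g,x,y$. *)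

From Stdlib Require Import Reals.
Open Scope R_scope.

Definition set (G : Type) := G -> Prop.

Definition is_topology {G : Type} (T : set G -> Prop) : Prop :=
  T (fun _ => True) /\
  T (fun _ => False) /\
  (forall U V, T U -> T V -> T (fun x => U x /\ V x)) /\
  (forall F : set G -> Prop, (forall U, F U -> T U) ->
     T (fun x => exists U, F U /\ U x)).

Definition is_topological_group {G : Type} (op : G -> G -> G) (inv : G -> G)
    (e : G) (T : set G -> Prop) : Prop :=
  (forall x y z, op (op x y) z = op x (op y z)) /\
  (forall x, op e x = x) /\ (forall x, op x e = x) /\
  (forall x, op (inv x) x = e) /\ (forall x, op x (inv x) = e) /\
  is_topology T /\
  (* continuity of multiplication G x G -> G (product topology) *)
  (forall W, T W -> forall x y, W (op x y) ->
     exists U V, T U /\ T V /\ U x /\ V y /\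
       (forall a b, U a -> V b -> W (op a b))) /\
  (forall W, T W -> T (fun x => W (inv x))).

Definition is_metric {G : Type} (d : G -> G -> R) : Prop :=
  (forall x y, 0 <= d x y) /\
  (forall x y, d x y = 0 <-> x = y) /\
  (forall x y, d x y = d y x) /\
  (forall x y z, d x z <= d x y + d y z).

Definition metric_open {G : Type} (d : G -> G -> R) (U : set G) : Prop :=
  forall x, U x -> exists eps, 0 < eps /\ forall y, d x y < eps -> U y.

Definition compatible {G : Type} (d : G -> G -> R) (T : set G -> Prop) : Prop :=
  forall U, T U <-> metric_open d U.

Definition metrizable {G : Type} (T : set G -> Prop) : Prop :=
  exists d : G -> G -> R, is_metric d /\ compatible d T.

Definition left_invariant {G : Type} (op : G -> G -> G) (d : G -> G -> R) : Prop :=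
  forall g x y, d (op g x) (op g y) = d x y.

Definition ltrans {G : Type} (op : G -> G -> G) (x : G) (U : set G) : set G :=
  fun z => exists u, U u /\ z = op x u.

Definition family (G : Type) := set G -> Prop.

Definition open_family {G : Type} (T : set G -> Prop) (B : family G) : Prop :=
  forall V, B V -> T V.

(* distinct members are disjoint (distinct = extensionally different) *)
Definition pairwise_disjoint {G : Type} (B : family G) : Prop :=
  forall V W, B V -> B W -> (exists z, V z /\ W z) -> forall y, V y <-> W y.

Definition refines {G : Type} (B A : family G) : Prop :=
  forall V, B V -> exists W, A W /\ forall z, V z -> W z.

Definition O_of {G : Type} (op : G -> G -> G) (U : set G) : family G :=
  fun W => exists x, W = ltrans op x U.

Definition nbd_e {G : Type} (T : set G -> Prop) (e : G) (U : set G) : Prop :=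
  T U /\ U e.

Definition Smirnov_Sc_Onbd_O {G : Type} (op : G -> G -> G) (e : G)
    (T : set G -> Prop) : Prop :=
  forall U : nat -> set G, (forall n, nbd_e T e (U n)) ->
    exists (k : nat) (B : nat -> family G),
      (forall n, (n <= k)%nat ->
         open_family T (B n) /\ pairwise_disjoint (B n) /\
         refines (B n) (O_of op (U n))) /\
      (forall g, exists n, (n <= k)%nat /\ exists V, B n V /\ V g).

Definition diam_lt {G : Type} (d : G -> G -> R) (V : set G) (eps : R) : Prop :=
  exists r, r < eps /\ forall x y, V x -> V y -> d x y <= r.

Definition finitary_Haver {G : Type} (T : set G -> Prop) (d : G -> G -> R) : Prop :=
  forall eps : nat -> R, (forall n, 0 < eps n) ->
    exists (k : nat) (V : nat -> family G),
      (forall n, (n <= k)%nat ->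
         open_family T (V n) /\ pairwise_disjoint (V n) /\
         (forall W, V n W -> diam_lt d W (eps n))) /\
      (forall g, exists n, (n <= k)%nat /\ exists W, V n W /\ W g).

(* (1) => (2) is direct: for a left-invariant metric d, every translate
   x B(e, eps/3) of a ball has diameter < eps, so a Smirnov selection for the
   neighbourhoods B(e, eps n / 3) is a finitary Haver cover for (eps n).
   (2) => (1) needs ONE compatible left-invariant metric d: each neighbourhood
   U n of e contains some ball B(e, eps n), and a set of d-diameter < eps n
   meeting w lies in w B(e, eps n) ⊆ w U n.

   Most of the file proves the Birkhoff-Kakutani theorem supplying that metric:
   from a compatible metric we build a chain of neighbourhoods V n of e with
   V (S n)^3 ⊆ V n forming a base at e; the word norm N g (infimum of the costs
   sum (1/2)^(n_i) of words g = g_1 ... g_k with g_i in V (n_i)) satisfies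
   V n ⊆ {N <= (1/2)^n} and {N < (1/2)^n} ⊆ V n (the chain lemma), and
   d(x, y) = N(x^-1 y) + N(y^-1 x) is the required metric. *)
From Stdlib Require Import Reals Lra Lia List Classical ClassicalEpsilon
  FunctionalExtensionality PropExtensionality.
Import ListNotations.
Open Scope R_scope.

Lemma half_pow_pos (n : nat) : 0 < (/2)^n.
Proof. apply pow_lt; lra. Qed.

Lemma half_pow_S (n : nat) : (/2)^(S n) = (/2)^n / 2.
Proof. simpl; field. Qed.

Lemma half_pow_antitone (m n : nat) : (m <= n)%nat -> (/2)^n <= (/2)^m.
Proof.
  induction 1 as [|n _ IH]; [lra|].
  rewrite half_pow_S; pose proof (half_pow_pos n); lra.
Qed.

Lemma half_pow_lt_exponent (m n : nat) : (/2)^m < (/2)^n -> (n < m)%nat.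
Proof.
  intros Hlt; destruct (Nat.lt_ge_cases n m) as [|Hmn]; auto.
  pose proof (half_pow_antitone _ _ Hmn); lra.
Qed.

Lemma half_pow_below (eps : R) : 0 < eps -> exists n, (/2)^n < eps.
Proof.
  intros Heps.
  destruct (pow_lt_1_zero (/2)) with (y := eps) as [N HN]; auto.
  { rewrite Rabs_pos_eq; lra. }
  exists N; specialize (HN N (le_n N)).
  rewrite Rabs_pos_eq in HN; [exact HN | left; apply half_pow_pos].
Qed.

Lemma glb_exists (P : R -> Prop) (lo : R) :
  (forall r, P r -> lo <= r) -> (exists r, P r) ->
  exists m, (forall r, P r -> m <= r) /\ (forall c, m < c -> exists r, P r /\ r < c).
Proof.
  intros Hlo [r0 Hr0].
  destruct (completeness (fun s => P (- s))) as [M [Hub Hleast]].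
  { exists (- lo); intros s Hs; specialize (Hlo _ Hs); lra. }
  { exists (- r0); rewrite Ropp_involutive; exact Hr0. }
  exists (- M); split.
  - intros r Hr; enough (- r <= M) by lra.
    apply Hub; rewrite Ropp_involutive; exact Hr.
  - intros c Hc; apply NNPP; intros Hno.
    enough (M <= - c) by lra.
    apply Hleast; intros s Hs.
    destruct (Rle_lt_dec c (- s)) as [|Hlt]; [lra|].
    exfalso; apply Hno; exists (- s); auto.
Qed.

Lemma open_of_local {G : Type} (T : set G -> Prop) (HT : is_topology T) (U : set G) :
  (forall x, U x -> exists W, T W /\ W x /\ (forall z, W z -> U z)) -> T U.
Proof.
  intros Hloc; destruct HT as (_ & _ & _ & Hunion).
  specialize (Hunion (fun W => T W /\ forall z, W z -> U z) (fun W HW => proj1 HW)).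
  replace U with (fun x => exists W, (T W /\ forall z, W z -> U z) /\ W x); auto.
  apply functional_extensionality; intros x; apply propositional_extensionality; split.
  - intros (W & (_ & HWU) & Wx); auto.
  - intros Ux; destruct (Hloc x Ux) as (W & HW & Wx & HWU); eauto.
Qed.

Lemma open_inter {G : Type} (T : set G -> Prop) (HT : is_topology T) (A B : set G) :
  T A -> T B -> T (fun x => A x /\ B x).
Proof. destruct HT as (_ & _ & Hinter & _); auto. Qed.

Lemma ball_open {G : Type} (d : G -> G -> R) (Hd : is_metric d) (c : G) (r : R) :
  metric_open d (fun x => d c x < r).
Proof.
  destruct Hd as (_ & _ & _ & Htri).
  intros x Hx; exists (r - d c x); split; [lra|].
  intros y Hy; pose proof (Htri c x y); lra.
Qed.

Lemma metric_self {G : Type} (d : G -> G -> R) (Hd : is_metric d) (x : G) : d x x = 0.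
Proof. apply (proj1 (proj2 Hd)); reflexivity. Qed.

Section Words.

Variables (G : Type) (op : G -> G -> G) (e : G).
Hypothesis assoc : forall x y z, op (op x y) z = op x (op y z).
Hypothesis idl : forall x, op e x = x.
Hypothesis idr : forall x, op x e = x.

Definition word_prod (l : list (G * nat)) : G :=
  fold_right (fun p acc => op (fst p) acc) e l.

Definition word_cost (l : list (G * nat)) : R :=
  fold_right (fun p acc => (/2)^(snd p) + acc) 0 l.

Definition word_in (V : nat -> set G) (l : list (G * nat)) : Prop :=
  Forall (fun p => V (snd p) (fst p)) l.

Lemma word_prod_app (l1 l2 : list (G * nat)) :
  word_prod (l1 ++ l2) = op (word_prod l1) (word_prod l2).
Proof.
  induction l1 as [|p l1 IH]; simpl; [rewrite idl | rewrite IH, assoc]; auto.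
Qed.

Lemma word_cost_app (l1 l2 : list (G * nat)) :
  word_cost (l1 ++ l2) = word_cost l1 + word_cost l2.
Proof. induction l1 as [|p l1 IH]; simpl; [|rewrite IH]; lra. Qed.

Lemma word_cost_nonneg (l : list (G * nat)) : 0 <= word_cost l.
Proof.
  induction l as [|p l IH]; simpl; [lra|].
  pose proof (half_pow_pos (snd p)); lra.
Qed.

Lemma word_split_cost (l : list (G * nat)) (t : R) :
  0 < t -> t <= word_cost l ->
  exists l1 x l2, l = l1 ++ x :: l2 /\ word_cost l1 < t /\
                  t <= word_cost l1 + (/2)^(snd x).
Proof.
  revert t; induction l as [|y l IH]; intros t Ht Hle; simpl in Hle; [lra|].
  destruct (Rle_lt_dec t ((/2)^(snd y))) as [Hfirst|Hlater].
  - exists [], y, l; simpl; split; [auto | lra].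
  - destruct (IH (t - (/2)^(snd y))) as (l1 & x & l2 & -> & H1 & H2); try lra.
    exists (y :: l1), x, l2; simpl; split; [auto | lra].
Qed.

Variable V : nat -> set G.
Hypothesis V_unit : forall n, V n e.
Hypothesis V_cube : forall n a b c,
  V (S n) a -> V (S n) b -> V (S n) c -> V n (op a (op b c)).

(* The chain is decreasing, since V (S n) ⊆ V (S n) * e * e ⊆ V n. *)
Lemma chain_antitone (m n : nat) (x : G) : (n <= m)%nat -> V m x -> V n x.
Proof.
  induction 1 as [|m _ IH]; auto.
  intros Hx; apply IH; rewrite <- (idr x), <- (idr e); apply V_cube; auto.
Qed.

Lemma light_letter (p : G * nat) (n : nat) :
  V (snd p) (fst p) -> (/2)^(snd p) < (/2)^n -> V (S n) (fst p).
Proof.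
  intros Hp Hlt; apply (chain_antitone (snd p)); auto.
  apply half_pow_lt_exponent; exact Hlt.
Qed.

(* Induction on the length of the word:
   a word of cost at least (1/2)^(S n) is cut as l1 ++ x :: l2 with l1 and l2
   of cost below (1/2)^(S n), so its product lies in V (S n)^3 ⊆ V n. *)
Lemma chain_word (l : list (G * nat)) (n : nat) :
  word_in V l -> word_cost l < (/2)^n -> V n (word_prod l).
Proof.
  remember (length l) as k eqn:Hk; assert (Hlen : (length l <= k)%nat) by lia.
  clear Hk; revert l n Hlen.
  induction k as [|k IH]; intros l n Hlen Hin Hcost.
  { destruct l; simpl in Hlen; [apply V_unit | lia]. }
  pose proof (half_pow_S n) as Hhalf.
  destruct (Rlt_le_dec (word_cost l) ((/2)^(S n))) as [Hsmall|Hbig].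
  - destruct l as [|y l']; [apply V_unit|].
    inversion Hin as [|? ? Hy Hin']; subst; simpl in Hlen, Hsmall |- *.
    pose proof (word_cost_nonneg l'); pose proof (half_pow_pos (snd y)).
    assert (Htail : V (S n) (word_prod l')) by (apply IH; [lia | exact Hin' | lra]).
    assert (Hhead : V (S n) (fst y)) by (apply light_letter; auto; lra).
    rewrite <- (idr (word_prod l')); apply V_cube; auto.
  - destruct (word_split_cost l ((/2)^(S n))) as (l1 & x & l2 & -> & H1 & H2);
      [apply half_pow_pos | exact Hbig |].
    apply Forall_app in Hin as [Hin1 Hin2]; inversion Hin2 as [|? ? Hx Hin2']; subst.
    rewrite length_app in Hlen; simpl in Hlen.
    rewrite word_cost_app in Hcost; simpl in Hcost.
    pose proof (word_cost_nonneg l1); pose proof (word_cost_nonneg l2).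
    assert (Hleft : V (S n) (word_prod l1)) by (apply IH; auto; lia).
    assert (Hmid : V (S n) (fst x)) by (apply light_letter; auto; lra).
    assert (Hright : V (S n) (word_prod l2)) by (apply IH; auto; [lia | lra]).
    rewrite word_prod_app; simpl; apply V_cube; auto.
Qed.

(* N is the word norm of the chain: N g is the infimum of the costs of the
   words over V whose product is g. *)
Definition is_word_norm (N : G -> R) : Prop :=
  (forall l, word_in V l -> N (word_prod l) <= word_cost l) /\
  (forall g c, N g < c -> exists l, word_in V l /\ word_prod l = g /\ word_cost l < c).

(* If V 0 is everything, every g is the one-letter word (g, 0), so the
   infimum exists. *)
Lemma word_norm_exists : (forall x, V 0%nat x) -> exists N, is_word_norm N.
Proof.
  intros V0.
  assert (Hinf : forall g, exists m,
    (forall r, (exists l, word_in V l /\ word_prod l = g /\ r = word_cost l) -> m <= r) /\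
    (forall c, m < c -> exists r,
       (exists l, word_in V l /\ word_prod l = g /\ r = word_cost l) /\ r < c)).
  { intros g; apply (glb_exists _ 0).
    - intros r (l & _ & _ & ->); apply word_cost_nonneg.
    - exists (word_cost [(g, 0%nat)]), [(g, 0%nat)].
      repeat split; [repeat constructor; apply V0 | apply idr]. }
  destruct (choice _ Hinf) as [N HN]; exists N; split.
  - intros l Hl; apply (proj1 (HN (word_prod l))); eauto.
  - intros g c Hc; destruct (proj2 (HN g) c Hc) as (r & (l & Hl & Hg & ->) & Hr); eauto.
Qed.

Section WordNorm.
Variable N : G -> R.
Hypothesis HN : is_word_norm N.

Lemma word_norm_nonneg (g : G) : 0 <= N g.
Proof.
  destruct (Rle_lt_dec 0 (N g)) as [|Hneg]; auto.
  destruct (proj2 HN g 0 Hneg) as (l & _ & _ & Hl).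
  pose proof (word_cost_nonneg l); lra.
Qed.

Lemma word_norm_unit : N e = 0.
Proof.
  pose proof (proj1 HN [] (Forall_nil _)); simpl in *.
  pose proof (word_norm_nonneg e); lra.
Qed.

(* Concatenating words makes the norm subadditive. *)
Lemma word_norm_subadditive (g h : G) : N (op g h) <= N g + N h.
Proof.
  apply Rnot_lt_le; intros Hlt; set (gap := N (op g h) - N g - N h).
  destruct (proj2 HN g (N g + gap / 2)) as (l1 & Hl1 & <- & Hc1); [unfold gap; lra|].
  destruct (proj2 HN h (N h + gap / 2)) as (l2 & Hl2 & <- & Hc2); [unfold gap; lra|].
  pose proof (proj1 HN (l1 ++ l2) (proj2 (Forall_app _ _ _) (conj Hl1 Hl2))) as Hcat.
  rewrite word_prod_app, word_cost_app in Hcat; unfold gap in *; lra.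
Qed.

Lemma word_norm_small (g : G) (n : nat) : N g < (/2)^n -> V n g.
Proof.
  intros Hg; destruct (proj2 HN g _ Hg) as (l & Hl & <- & Hc).
  apply chain_word; auto.
Qed.

Lemma word_norm_of_chain (g : G) (n : nat) : V n g -> N g <= (/2)^n.
Proof.
  intros Hg; pose proof (proj1 HN [(g, n)]) as Hone; simpl in Hone.
  rewrite idr, Rplus_0_r in Hone; apply Hone; repeat constructor; exact Hg.
Qed.
End WordNorm.
End Words.

Section TopologicalGroup.

Variables (G : Type) (op : G -> G -> G) (inv : G -> G) (e : G) (T : set G -> Prop).
Hypothesis HG : is_topological_group op inv e T.

Lemma tg_assoc (x y z : G) : op (op x y) z = op x (op y z).
Proof. destruct HG as (H & _); apply H. Qed.

Lemma tg_idl (x : G) : op e x = x.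
Proof. destruct HG as (_ & H & _); apply H. Qed.

Lemma tg_idr (x : G) : op x e = x.
Proof. destruct HG as (_ & _ & H & _); apply H. Qed.

Lemma tg_invl (x : G) : op (inv x) x = e.
Proof. destruct HG as (_ & _ & _ & H & _); apply H. Qed.

Lemma tg_invr (x : G) : op x (inv x) = e.
Proof. destruct HG as (_ & _ & _ & _ & H & _); apply H. Qed.

Lemma tg_topology : is_topology T.
Proof. destruct HG as (_ & _ & _ & _ & _ & H & _); exact H. Qed.

Lemma tg_mul_continuous (W : set G) (x y : G) : T W -> W (op x y) ->
  exists U V, T U /\ T V /\ U x /\ V y /\ (forall a b, U a -> V b -> W (op a b)).
Proof. destruct HG as (_ & _ & _ & _ & _ & _ & H & _); auto. Qed.

Lemma tg_inv_open (W : set G) : T W -> T (fun x => W (inv x)).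
Proof. destruct HG as (_ & _ & _ & _ & _ & _ & _ & H); auto. Qed.

Lemma mul_inv_cancel_l (x y : G) : op x (op (inv x) y) = y.
Proof. rewrite <- tg_assoc, tg_invr, tg_idl; reflexivity. Qed.

Lemma inv_mul_cancel_l (x y : G) : op (inv x) (op x y) = y.
Proof. rewrite <- tg_assoc, tg_invl, tg_idl; reflexivity. Qed.

Lemma inv_mul_translate (g x y : G) : op (inv (op g x)) (op g y) = op (inv x) y.
Proof.
  rewrite <- (mul_inv_cancel_l x y) at 1.
  rewrite <- (tg_assoc g x), inv_mul_cancel_l; reflexivity.
Qed.

Lemma open_left_shift (c : G) (A : set G) : T A -> T (fun y => A (op c y)).
Proof.
  intros HA; apply open_of_local; [apply tg_topology|]; intros y Hy.
  destruct (tg_mul_continuous A c y HA Hy) as (P & Q & _ & HQ & Pc & Qy & HPQ).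
  exists Q; auto.
Qed.

Lemma open_right_shift (c : G) (A : set G) : T A -> T (fun y => A (op y c)).
Proof.
  intros HA; apply open_of_local; [apply tg_topology|]; intros y Hy.
  destruct (tg_mul_continuous A y c HA Hy) as (P & Q & HP & _ & Py & Qc & HPQ).
  exists P; auto.
Qed.

Lemma nbd_square_root (W : set G) : nbd_e T e W ->
  exists W1, nbd_e T e W1 /\ forall a b, W1 a -> W1 b -> W (op a b).
Proof.
  intros [HW We]; rewrite <- (tg_idl e) in We.
  destruct (tg_mul_continuous W e e HW We) as (P & Q & HP & HQ & Pe & Qe & HPQ).
  exists (fun x => P x /\ Q x); repeat split; auto.
  - apply open_inter; auto; apply tg_topology.
  - intros a b [Pa _] [_ Qb]; auto.
Qed.

Section ChainOfNeighbourhoods.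
Variable d0 : G -> G -> R.
Hypothesis Hd0 : is_metric d0.
Hypothesis Hc0 : compatible d0 T.

Definition shrinks (n : nat) (W W' : set G) : Prop :=
  nbd_e T e W' /\ (forall a b c, W' a -> W' b -> W' c -> W (op a (op b c))) /\
  (forall x, W' x -> d0 e x < (/2)^n).

Lemma shrink_nbd (n : nat) (W : set G) : nbd_e T e W -> exists W', shrinks n W W'.
Proof.
  intros HW.
  destruct (nbd_square_root W HW) as (W1 & HW1 & H1).
  destruct (nbd_square_root W1 HW1) as (W2 & [HW2 W2e] & H2).
  exists (fun x => W2 x /\ d0 e x < (/2)^n); repeat split; auto.
  - apply open_inter; [apply tg_topology | exact HW2 | apply Hc0, ball_open, Hd0].
  - rewrite metric_self by exact Hd0; apply half_pow_pos.
  - intros a b c [Wa _] [Wb _] [Wc _]; apply H1; auto.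
    rewrite <- (tg_idr a); apply H2; auto.
  - intros x [_ Hx]; exact Hx.
Qed.

Lemma nbd_chain : exists V : nat -> set G,
  (forall n, nbd_e T e (V n)) /\ (forall x, V 0%nat x) /\
  (forall n a b c, V (S n) a -> V (S n) b -> V (S n) c -> V n (op a (op b c))) /\
  (forall x, (forall n, V n x) -> x = e) /\
  (forall B, nbd_e T e B -> exists n, forall x, V n x -> B x).
Proof.
  assert (Hstep : forall p : nat * set G, exists W',
            nbd_e T e (snd p) -> shrinks (fst p) (snd p) W').
  { intros [n W]; destruct (classic (nbd_e T e W)) as [HW|HW].
    - destruct (shrink_nbd n W HW) as [W' HW']; eauto.
    - exists W; tauto. }
  destruct (choice _ Hstep) as [shrink Hshrink].
  set (V := fix V (n : nat) : set G :=
              match n with O => fun _ => True | S m => shrink (m, V m) end).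
  assert (HV : forall n, nbd_e T e (V n) /\ shrinks n (V n) (V (S n))).
  { induction n as [|n [IH _]]; simpl.
    - assert (Hfull : nbd_e T e (V 0%nat)) by (split; [apply tg_topology | exact I]).
      split; [exact Hfull | apply (Hshrink (0%nat, V 0%nat) Hfull)].
    - pose proof (Hshrink (n, V n) IH) as Hs; split; [apply Hs|].
      apply (Hshrink (S n, V (S n))), Hs. }
  assert (Hball : forall n x, V (S n) x -> d0 e x < (/2)^n) by apply HV.
  exists V; repeat split.
  - apply HV.
  - apply HV.
  - intros n; apply HV.
  - intros x Hx; destruct Hd0 as (Hpos & Hzero & _).
    destruct (Rle_lt_dec (d0 e x) 0) as [Hle | Hlt].
    + symmetry; apply Hzero; pose proof (Hpos e x); lra.
    + destruct (half_pow_below _ Hlt) as [n Hn].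
      specialize (Hball n x (Hx (S n))); lra.
  - intros B [HB Be]; apply Hc0 in HB; destruct (HB e Be) as (eps & Heps & Hsub).
    destruct (half_pow_below _ Heps) as [n Hn]; exists (S n); intros x Hx.
    apply Hsub; specialize (Hball n x Hx); lra.
Qed.
End ChainOfNeighbourhoods.

Section WordMetric.
Variable V : nat -> set G.
Hypothesis V_nbd : forall n, nbd_e T e (V n).
Hypothesis V_cube : forall n a b c,
  V (S n) a -> V (S n) b -> V (S n) c -> V n (op a (op b c)).
Hypothesis V_separates : forall x, (forall n, V n x) -> x = e.
Hypothesis V_base : forall B, nbd_e T e B -> exists n, forall x, V n x -> B x.
Variable N : G -> R.
Hypothesis HN : is_word_norm G op e V N.

Definition word_metric (x y : G) : R := N (op (inv x) y) + N (op (inv y) x).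

Let V_unit (n : nat) : V n e := proj2 (V_nbd n).
Let N_nonneg : forall g, 0 <= N g := word_norm_nonneg G op e V N HN.
Let N_small : forall g n, N g < (/2)^n -> V n g :=
  word_norm_small G op e tg_assoc tg_idl tg_idr V V_unit V_cube N HN.
Let N_of_chain : forall g n, V n g -> N g <= (/2)^n :=
  word_norm_of_chain G op e tg_idr V N HN.

Lemma word_metric_is_metric : is_metric word_metric.
Proof.
  unfold word_metric.
  assert (Hchain : forall x y z, op (op (inv x) y) (op (inv y) z) = op (inv x) z)
    by (intros; rewrite tg_assoc, mul_inv_cancel_l; reflexivity).
  repeat split.
  - intros x y; pose proof (N_nonneg (op (inv x) y)); pose proof (N_nonneg (op (inv y) x)); lra.
  - intros Hzero; pose proof (N_nonneg (op (inv x) y)); pose proof (N_nonneg (op (inv y) x)).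
    assert (Hdiff : op (inv x) y = e).
    { apply V_separates; intros n; apply N_small; pose proof (half_pow_pos n); lra. }
    rewrite <- (mul_inv_cancel_l x y), Hdiff, tg_idr; reflexivity.
  - intros ->; rewrite tg_invl, (word_norm_unit G op e V N HN); lra.
  - intros; lra.
  - intros x y z.
    pose proof (word_norm_subadditive G op e tg_assoc tg_idl V N HN
                  (op (inv x) y) (op (inv y) z)).
    pose proof (word_norm_subadditive G op e tg_assoc tg_idl V N HN
                  (op (inv z) y) (op (inv y) x)).
    rewrite !Hchain in *; lra.
Qed.

Lemma word_metric_left_invariant : left_invariant op word_metric.
Proof. intros g x y; unfold word_metric; rewrite !inv_mul_translate; reflexivity. Qed.

Lemma word_metric_compatible : compatible word_metric T.
Proof.
  intros U; split.
  - (* an open U around x contains x * B for a neighbourhood B ⊇ V n of e *)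
    intros HU x Ux; rewrite <- (tg_idr x) in Ux.
    destruct (tg_mul_continuous U x e HU Ux) as (A & B & _ & HB & Ax & Be & HAB).
    destruct (V_base B (conj HB Be)) as [n Hn].
    exists ((/2)^n); split; [apply half_pow_pos|]; intros y Hy.
    unfold word_metric in Hy; pose proof (N_nonneg (op (inv y) x)).
    rewrite <- (mul_inv_cancel_l x y); apply HAB, Hn, N_small; auto; lra.
  - (* a metric ball around x contains the open set x V n ∩ (V n x^-1)^-1 *)
    intros HU; apply open_of_local; [apply tg_topology|]; intros x Ux.
    destruct (HU x Ux) as (eps & Heps & Hball).
    destruct (half_pow_below (eps / 2)) as [n Hn]; [lra|].
    exists (fun y => V n (op (inv x) y) /\ V n (op (inv y) x)); repeat split.
    + apply open_inter; [apply tg_topology | |].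
      * apply open_left_shift, V_nbd.
      * apply (tg_inv_open (fun z => V n (op z x))), open_right_shift, V_nbd.
    + rewrite tg_invl; apply V_unit.
    + rewrite tg_invl; apply V_unit.
    + intros y [Hxy Hyx]; apply Hball; unfold word_metric.
      apply N_of_chain in Hxy; apply N_of_chain in Hyx; lra.
Qed.
End WordMetric.

Lemma left_invariant_metric_exists : metrizable T ->
  exists d, is_metric d /\ compatible d T /\ left_invariant op d.
Proof.
  intros (d0 & Hd0 & Hc0).
  destruct (nbd_chain d0 Hd0 Hc0) as (V & Vnbd & Vfull & Vcube & Vsep & Vbase).
  destruct (word_norm_exists G op e tg_idr V Vfull) as [N HN].
  exists (word_metric N); split; [|split].
  - apply (word_metric_is_metric V Vnbd Vcube Vsep N HN).
  - apply (word_metric_compatible V Vnbd Vcube Vbase N HN).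
  - apply word_metric_left_invariant.
Qed.
End TopologicalGroup.

Lemma translate_ball_diam {G : Type} (op : G -> G -> G) (e : G) (d : G -> G -> R)
    (Hd : is_metric d) (Hli : left_invariant op d) (x a b : G) (r : R) :
  ltrans op x (fun y => d e y < r) a -> ltrans op x (fun y => d e y < r) b ->
  d a b <= 2 * r.
Proof.
  intros (u & Hu & ->) (v & Hv & ->); rewrite Hli.
  destruct Hd as (_ & _ & Hsym & Htri).
  pose proof (Htri u e v); rewrite (Hsym u e) in *; lra.
Qed.

Lemma smirnov_implies_haver {G : Type} (op : G -> G -> G) (e : G) (T : set G -> Prop)
    (d : G -> G -> R) (Hd : is_metric d) (Hc : compatible d T)
    (Hli : left_invariant op d) :
  Smirnov_Sc_Onbd_O op e T -> finitary_Haver T d.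
Proof.
  intros HS eps Heps.
  destruct (HS (fun n y => d e y < eps n / 3)) as (k & B & HB & Hcover).
  { intros n; split; [apply Hc, ball_open, Hd|].
    rewrite metric_self by exact Hd; specialize (Heps n); lra. }
  exists k, B; split; [|exact Hcover].
  intros n Hn; destruct (HB n Hn) as (Hopen & Hdisj & Hrefine).
  split; [exact Hopen | split; [exact Hdisj |]]; intros W HW.
  destruct (Hrefine W HW) as (W' & [x ->] & HWW').
  exists (2 * (eps n / 3)); split; [specialize (Heps n); lra|].
  intros a b Ha Hb; apply (translate_ball_diam op e d Hd Hli x); auto.
Qed.

(* (2) => (1): given a compatible left-invariant metric, each neighbourhood
   U n of e contains a ball B(e, eps n); a set of diameter below eps n through
   w then lies in w B(e, eps n) ⊆ w U n, so a finitary Haver cover for the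
   radii eps n refines the translate covers O(U n). *)
Lemma haver_implies_smirnov {G : Type} (op : G -> G -> G) (inv : G -> G) (e : G)
    (T : set G -> Prop) (HG : is_topological_group op inv e T)
    (d : G -> G -> R) (Hc : compatible d T) (Hli : left_invariant op d) :
  finitary_Haver T d -> Smirnov_Sc_Onbd_O op e T.
Proof.
  intros HH U HU.
  assert (Hradius : forall n, exists eps, 0 < eps /\ forall y, d e y < eps -> U n y).
  { intros n; destruct (HU n) as [HUo HUe]; apply Hc in HUo; apply HUo, HUe. }
  destruct (choice _ Hradius) as [eps Heps].
  destruct (HH eps (fun n => proj1 (Heps n))) as (k & B & HB & Hcover).
  exists k, B; split; [|exact Hcover].
  intros n Hn; destruct (HB n Hn) as (Hopen & Hdisj & Hsmall).
  split; [exact Hopen | split; [exact Hdisj |]]; intros W HW.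
  destruct (classic (exists w, W w)) as [[w Hw] | Hempty].
  - exists (ltrans op w (U n)); split; [exists w; reflexivity|].
    intros z Hz; exists (op (inv w) z); split.
    + apply (proj2 (Heps n)); destruct (Hsmall W HW) as (r & Hr & Hdiam).
      rewrite <- (tg_invl G op inv e T HG w), Hli.
      pose proof (Hdiam w z Hw Hz); lra.
    + rewrite (mul_inv_cancel_l G op inv e T HG); reflexivity.
  - exists (ltrans op e (U n)); split; [exists e; reflexivity|].
    intros z Hz; exfalso; eauto.
Qed.

Theorem theorem2p4 (G : Type) (op : G -> G -> G) (inv : G -> G) (e : G)
    (T : set G -> Prop)
    (HG : is_topological_group op inv e T) (Hm : metrizable T) :
  Smirnov_Sc_Onbd_O op e T <->
  (forall d : G -> G -> R, is_metric d -> compatible d T ->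
     left_invariant op d -> finitary_Haver T d).
Proof.
  split.
  - intros HS d Hd Hc Hli; exact (smirnov_implies_haver op e T d Hd Hc Hli HS).
  - intros HH.
    destruct (left_invariant_metric_exists G op inv e T HG Hm) as (d & Hd & Hc & Hli).
    exact (haver_implies_smirnov op inv e T HG d Hc Hli (HH d Hd Hc Hli)).
Qed.
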